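(* Let $N\geq 0$ be an integer. Then for all $0<x<\pi/2$, \[ \alpha_N x^4<\left(\frac{x}{\sin x}\right)^2+\frac{x}{\tan x}-\left(2+4x^4\sum_{k=1}^{N}\frac{1}{(\pi^2k^2-x^2)^2}\right)<\beta_N x^4, \] with the best possible constants \[ \alpha_N=\frac{2\psi'''(N+1)}{3\pi^4},\qquad \beta_N=\frac{8\bigl((2N+1)^2\psi'(N+\tfrac12)-4(N+1)\bigr)}{(2N+1)^2\pi^4}. \]
   Context: $\psi=\Gamma'/\Gamma$ is the digamma function, and $\psi',\psi'''$ denote its first and third derivatives (polygamma functions). An empty sum is understood to be zero. *)

From Stdlib Require Import Reals Lra ClassicalEpsilon.
Open Scope R_scope.

(* Value of a convergent series sum_{k>=0} f k (chosen by epsilon; it is the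
   unique l with infinite_sum f l whenever the series converges). *)
Definition series_value (f : nat -> R) : R :=
  epsilon (inhabits 0) (fun l => infinite_sum f l).

(* Polygamma functions via their standard series:
   psi^(m)(s) = (-1)^(m+1) m! sum_{k>=0} 1/(s+k)^(m+1), for s > 0. *)
Definition psi1 (s : R) : R := series_value (fun k => / (s + INR k) ^ 2).
Definition psi3 (s : R) : R := 6 * series_value (fun k => / (s + INR k) ^ 4).

Fixpoint sum_1_to (f : nat -> R) (N : nat) : R :=
  match N with
  | O => 0
  | S n => sum_1_to f n + f (S n)
  end.

Definition F_N (N : nat) (x : R) : R :=
  (x / sin x) ^ 2 + x / tan x
  - (2 + 4 * x ^ 4 * sum_1_to (fun k => / (PI ^ 2 * INR k ^ 2 - x ^ 2) ^ 2) N).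

Definition alpha_N (N : nat) : R := 2 * psi3 (INR N + 1) / (3 * PI ^ 4).

Definition beta_N (N : nat) : R :=
  8 * ((2 * INR N + 1) ^ 2 * psi1 (INR N + / 2) - 4 * (INR N + 1))
  / ((2 * INR N + 1) ^ 2 * PI ^ 4).

(* Iterating the doubling formulas for 1/sin^2 and cot writes x^2/sin^2 x + x cot x
   as a sum of 2^m values of A(u, t) = u^2/sin^2 t + u cot t with u = x/2^m.
   Grouping the terms at the angles (x + k PI)/2^m and (x - k PI)/2^m in pairs, and
   using 0 <= 1/sin^2 t - 1/t^2 <= 1 and the 1-Lipschitz continuity of cot t - 1/t on
   (0, PI/2), each pair equals 4 x^4/(PI^2 k^2 - x^2)^2 up to O(x^2/4^m).  Letting
   m -> oo gives F_N(x) = 4 x^4 D(x) with D(x) = sum_{k > N} (PI^2 k^2 - x^2)^-2.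
   D increases strictly on [0, PI/2], D(0) = alpha_N/4, and D(PI/2) = beta_N/4 by
   partial fractions in k; sharpness follows from D(x) <= (1 + x^2) D(0) and
   D(PI/2 - d) >= (1 - 2d) D(PI/2). *)

From Stdlib Require Import Reals Lra Lia ClassicalEpsilon.
From Coquelicot Require Import Coquelicot.
Open Scope R_scope.

(* The n terms f 0, ..., f (n - 1); [sum_f_R0 f n] has n + 1 terms. *)
Fixpoint psum (f : nat -> R) (n : nat) : R :=
  match n with O => 0 | S k => psum f k + f k end.

Lemma psum_ext f g n :
  (forall j, (j < n)%nat -> f j = g j) -> psum f n = psum g n.
Proof.
induction n as [|n IH]; intros H; simpl; [reflexivity|].
rewrite IH by (intros j Hj; apply H; lia).
rewrite H by lia; reflexivity.
Qed.

Lemma psum_add_range f a b :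
  psum f (a + b) = psum f a + psum (fun j => f (a + j)%nat) b.
Proof.
induction b as [|b IH]; simpl; [rewrite Nat.add_0_r; ring|].
rewrite Nat.add_succ_r; simpl; rewrite IH; ring.
Qed.

Lemma psum_shift f n : psum f (S n) = f O + psum (fun j => f (S j)) n.
Proof. induction n as [|n IH]; simpl in *; [ring|rewrite IH; ring]. Qed.

Lemma psum_rev f n : psum f n = psum (fun j => f (n - S j)%nat) n.
Proof.
induction n as [|n IH]; [reflexivity|].
change (psum f (S n)) with (psum f n + f n).
rewrite psum_shift, IH; simpl; rewrite Nat.sub_0_r; ring.
Qed.

Lemma psum_plus f g n : psum (fun j => f j + g j) n = psum f n + psum g n.
Proof. induction n as [|n IH]; simpl; [|rewrite IH]; ring. Qed.

Lemma psum_minus f g n : psum (fun j => f j - g j) n = psum f n - psum g n.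
Proof. induction n as [|n IH]; simpl; [|rewrite IH]; ring. Qed.

Lemma psum_scal c f n : psum (fun j => c * f j) n = c * psum f n.
Proof. induction n as [|n IH]; simpl; [|rewrite IH]; ring. Qed.

Lemma psum_const c n : psum (fun _ => c) n = INR n * c.
Proof. induction n as [|n IH]; simpl psum; [simpl; ring|rewrite IH, S_INR; ring]. Qed.

Lemma psum_telescope g n : psum (fun j => g (S j) - g j) n = g n - g O.
Proof. induction n as [|n IH]; simpl; [|rewrite IH]; ring. Qed.

Lemma psum_le f g n :
  (forall j, (j < n)%nat -> f j <= g j) -> psum f n <= psum g n.
Proof.
induction n as [|n IH]; intros H; simpl; [lra|].
apply Rplus_le_compat; [apply IH; intros; apply H|apply H]; lia.
Qed.

Lemma psum_abs f n : Rabs (psum f n) <= psum (fun j => Rabs (f j)) n.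
Proof.
induction n as [|n IH]; simpl; [rewrite Rabs_R0; lra|].
eapply Rle_trans; [apply Rabs_triang|lra].
Qed.

Lemma psum_pair_ends f k :
  psum f (S k + S k) =
  f O + f (S k) + psum (fun i => f (S i) + f (S k + S k - S i)%nat) k.
Proof.
rewrite psum_add_range, psum_plus, psum_shift.
rewrite (psum_rev (fun j => f (S k + j)%nat)); simpl psum at 2.
rewrite Nat.sub_diag, Nat.add_0_r.
rewrite (psum_ext (fun j => f (S k + (k - j))%nat)
                  (fun j => f (S k + S k - S j)%nat)) by (intros; f_equal; lia).
ring.
Qed.

Lemma sum_f_R0_psum f n : sum_f_R0 f n = psum f (S n).
Proof. induction n as [|n IH]; simpl in *; [ring|rewrite IH; ring]. Qed.

Lemma sum_1_to_psum f n : sum_1_to f n = psum (fun i => f (S i)) n.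
Proof. induction n as [|n IH]; simpl; [|rewrite IH]; reflexivity. Qed.

(** * Doubling formulas for csc^2 and cot *)

Definition csc_cot (u t : R) : R := u ^ 2 / sin t ^ 2 + u * (cos t / sin t).

Lemma csc_cot_double u z : sin z <> 0 ->
  csc_cot u z = csc_cot (u / 2) (z / 2) + csc_cot (u / 2) ((z + PI) / 2).
Proof.
intros Hz; unfold csc_cot.
replace ((z + PI) / 2) with (z / 2 + PI / 2) by field.
assert (Ez : z = 2 * (z / 2)) by field.
set (w := z / 2) in *; clearbody w; subst z.
rewrite sin_2a, cos_2a in *; rewrite sin_plus, cos_plus, sin_PI2, cos_PI2.
assert (Hs : sin w <> 0) by (intro E; apply Hz; rewrite E; ring).
assert (Hc : cos w <> 0) by (intro E; apply Hz; rewrite E; ring).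
pose proof (sin2_cos2 w) as P; unfold Rsqr in P.
replace (u ^ 2) with (u ^ 2 * (sin w * sin w + cos w * cos w)) at 1
  by (rewrite P; ring).
field; auto.
Qed.

Lemma csc_cot_add_PI u t : csc_cot u (t + PI) = csc_cot u t.
Proof.
unfold csc_cot; rewrite neg_sin, neg_cos.
replace ((- sin t) ^ 2) with (sin t ^ 2) by ring.
unfold Rdiv; rewrite Rinv_opp; ring.
Qed.

Lemma INR_pow2 m : INR (2 ^ m) = 2 ^ m.
Proof. rewrite pow_INR; reflexivity. Qed.

Lemma csc_cot_iter m u z : 0 < z < PI ->
  csc_cot u z =
  psum (fun j => csc_cot (u / 2 ^ m) ((z + INR j * PI) / 2 ^ m)) (2 ^ m).
Proof.
intros Hz; induction m as [|m IH].
- simpl; unfold Rdiv; rewrite Rinv_1, !Rmult_1_r, Rmult_0_l, Rplus_0_r; ring.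
- assert (Hm : 0 < 2 ^ m) by (apply pow_lt; lra).
  rewrite IH, Nat.pow_succ_r', Nat.mul_comm, Nat.mul_succ_r, Nat.mul_1_r.
  rewrite psum_add_range, <- psum_plus.
  apply psum_ext; intros j Hj.
  assert (Hj' : INR j + 1 <= 2 ^ m)
    by (rewrite <- INR_pow2, <- S_INR; apply le_INR; lia).
  rewrite csc_cot_double.
  + rewrite plus_INR, INR_pow2; simpl pow.
    f_equal; f_equal; field; lra.
  + apply Rgt_not_eq, sin_gt_0.
    * apply Rdiv_lt_0_compat; [pose proof (pos_INR j); pose proof PI_RGT_0; nra | lra].
    * apply Rlt_div_l; nra.
Qed.

Lemma sin_le_id t : 0 <= t -> sin t <= t.
Proof.
intros H; destruct (Req_dec t 0) as [->|]; [rewrite sin_0; lra|].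
left; apply sin_lt_x; lra.
Qed.

Lemma id_mul_cos_le_sin t : 0 <= t <= PI / 2 -> t * cos t <= sin t.
Proof.
intros Ht.
destruct (MVT_gen (fun s => sin s - s * cos s) 0 t (fun s => s * sin s))
  as [c [Hc E]].
- intros s _; auto_derive; [auto | ring].
- intros s _; apply continuity_pt_filterlim,
    (ex_derive_continuous (fun s => sin s - s * cos s)); auto_derive; auto.
- rewrite Rmin_left, Rmax_right in Hc by lra; rewrite sin_0 in E.
  assert (0 <= sin c) by (apply sin_ge_0; pose proof PI_RGT_0; lra).
  assert (0 <= c * sin c * (t - 0)) by (apply Rmult_le_pos; [apply Rmult_le_pos|]; lra).
  lra.
Qed.

Lemma cos_ge_1_sub_sq t : 0 <= t <= PI / 2 -> 1 - t ^ 2 / 2 <= cos t.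
Proof.
intros Ht; replace t with (2 * (t / 2)) at 2 by field; rewrite cos_2a_sin.
assert (0 <= sin (t / 2)) by (apply sin_ge_0; pose proof PI_RGT_0; lra).
assert (sin (t / 2) <= t / 2) by (apply sin_le_id; lra).
nra.
Qed.

Lemma inv_sin_sq_sub_inv_sq_bounds t : 0 < t < PI / 2 ->
  0 <= / sin t ^ 2 - / t ^ 2 <= 1.
Proof.
intros Ht.
assert (Hs : 0 < sin t) by (apply sin_gt_0; lra).
assert (Hst : sin t <= t) by (apply sin_le_id; lra).
assert (Hc : 0 <= cos t) by (apply cos_ge_0; lra).
assert (Htc : t * cos t <= sin t) by (apply id_mul_cos_le_sin; lra).
pose proof (sin2_cos2 t) as P; unfold Rsqr in P.
replace (/ sin t ^ 2 - / t ^ 2) with ((t ^ 2 - sin t ^ 2) / (sin t ^ 2 * t ^ 2))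
  by (field; lra).
assert (Hp : 0 < sin t ^ 2 * t ^ 2) by (apply Rmult_lt_0_compat; apply pow_lt; lra).
split.
- apply Rdiv_le_0_compat; [nra | exact Hp].
- apply (Rdiv_le_1 _ _ Hp).
  (* [t^2 - sin^2 t <= t^2 sin^2 t] is [t^2 cos^2 t <= sin^2 t] *)
  assert ((t * cos t) * (t * cos t) <= sin t * sin t)
    by (apply Rmult_le_compat; nra).
  nra.
Qed.

Lemma cot_sub_inv_lipschitz p q : 0 < p < PI / 2 -> 0 < q < PI / 2 ->
  Rabs ((cos p / sin p - / p) - (cos q / sin q - / q)) <= Rabs (p - q).
Proof.
intros Hp Hq.
set (g t := cos t / sin t - / t).
assert (Hpos : forall s, Rmin q p <= s <= Rmax q p -> 0 < s < PI / 2 /\ 0 < sin s).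
{ intros s Hs.
  assert (Hs' : 0 < s < PI / 2)
    by (unfold Rmin, Rmax in Hs; destruct Rle_dec in Hs; lra).
  split; [exact Hs' | apply sin_gt_0; lra]. }
destruct (MVT_gen g q p (fun s => / s ^ 2 - / sin s ^ 2)) as [c [Hc E]].
- intros s Hs; destruct (Hpos s ltac:(lra)) as [Hs' Hsin].
  unfold g; auto_derive; [repeat split; lra|].
  pose proof (sin2_cos2 s) as P; unfold Rsqr in P.
  field_simplify; try lra; f_equal; nra.
- intros s Hs; destruct (Hpos s Hs) as [Hs' Hsin].
  apply continuity_pt_filterlim, (ex_derive_continuous g).
  unfold g; auto_derive; repeat split; lra.
- destruct (Hpos c Hc) as [Hc' _].
  pose proof (inv_sin_sq_sub_inv_sq_bounds c Hc').
  fold (g p) (g q); rewrite E, Rabs_mult.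
  rewrite <- (Rmult_1_l (Rabs (p - q))) at 2.
  apply Rmult_le_compat_r; [apply Rabs_pos|].
  rewrite Rabs_left1; lra.
Qed.

Lemma csc_cot_pair_approx u a b : 0 < u -> 0 < a < PI / 2 -> 0 < - b < PI / 2 ->
  a + b = 2 * u ->
  Rabs (csc_cot u a + csc_cot u b - (u ^ 2 / a ^ 2 + u ^ 2 / b ^ 2 + u / a + u / b))
  <= 4 * u ^ 2.
Proof.
intros Hu Ha Hb Hab.
pose proof (inv_sin_sq_sub_inv_sq_bounds a Ha) as Ea.
pose proof (inv_sin_sq_sub_inv_sq_bounds (- b) Hb) as Eb.
pose proof (cot_sub_inv_lipschitz a (- b) Ha Hb) as Ec.
assert (Hsa : 0 < sin a) by (apply sin_gt_0; lra).
assert (Hsb : 0 < sin (- b)) by (apply sin_gt_0; lra).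
rewrite sin_neg in Eb, Ec, Hsb; rewrite cos_neg in Ec.
replace ((- sin b) ^ 2) with (sin b ^ 2) in Eb by ring.
replace ((- b) ^ 2) with (b ^ 2) in Eb by ring.
replace (a - - b) with (2 * u) in Ec by lra.
rewrite (Rabs_right (2 * u)) in Ec by lra.
apply Rabs_le_between in Ec.
set (e := cos a / sin a - / a - (cos b / - sin b - / - b)) in Ec.
replace (csc_cot u a + csc_cot u b - (u ^ 2 / a ^ 2 + u ^ 2 / b ^ 2 + u / a + u / b))
  with (u ^ 2 * (/ sin a ^ 2 - / a ^ 2) + u ^ 2 * (/ sin b ^ 2 - / b ^ 2) + u * e)
  by (unfold e, csc_cot; field; lra).
apply Rabs_le_between; nra.
Qed.

Lemma csc_cot_diag u : 0 < u < 1 -> Rabs (csc_cot u u - 2) <= 2 * u ^ 2.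
Proof.
intros Hu; pose proof PI2_3_2.
assert (Hu' : 0 < u < PI / 2) by lra.
pose proof (inv_sin_sq_sub_inv_sq_bounds u Hu') as E.
assert (Hs : 0 < sin u) by (apply sin_gt_0; lra).
assert (Htc : u * cos u <= sin u) by (apply id_mul_cos_le_sin; lra).
assert (Hcl : 1 - u ^ 2 / 2 <= cos u) by (apply cos_ge_1_sub_sq; lra).
assert (Hcot : cos u <= u * (cos u / sin u) <= 1).
{ rewrite Rmult_div_assoc; split.
  - assert (0 <= cos u) by (apply cos_ge_0; lra).
    assert (sin u <= u) by (apply sin_le_id; lra).
    apply Rle_div_r; nra.
  - apply Rle_div_l; lra. }
replace (csc_cot u u - 2)
  with (u ^ 2 * (/ sin u ^ 2 - / u ^ 2) + (u * (cos u / sin u) - 1))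
  by (unfold csc_cot; field; lra).
apply Rabs_le_between; nra.
Qed.

Lemma csc_cot_half_pi u : 0 < u < 1 -> Rabs (csc_cot u (u + PI / 2)) <= 6 * u ^ 2.
Proof.
intros Hu; pose proof PI2_3_2.
assert (Hs : 0 <= sin u) by (apply sin_ge_0; lra).
assert (Hsu : sin u <= u) by (apply sin_le_id; lra).
assert (Hc : 1 / 2 <= cos u) by (pose proof (cos_ge_1_sub_sq u); nra).
assert (Hic : 0 < / cos u <= 2).
{ split; [apply Rinv_0_lt_compat; lra|].
  replace 2 with (/ / 2) by field; apply Rinv_le_contravar; lra. }
unfold csc_cot; rewrite sin_plus, cos_plus, sin_PI2, cos_PI2.
replace (u ^ 2 / (sin u * 0 + cos u * 1) ^ 2
         + u * ((cos u * 0 - sin u * 1) / (sin u * 0 + cos u * 1)))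
  with (u ^ 2 * (/ cos u * / cos u) - u * sin u * / cos u) by (field; lra).
assert (0 <= u * sin u <= u * u)
  by (split; [apply Rmult_le_pos | apply Rmult_le_compat_l]; lra).
assert (0 <= / cos u * / cos u <= 4) by nra.
apply Rabs_le_between; nra.
Qed.

Lemma csc_cot_pairs x p : 0 < x < PI ->
  csc_cot x x =
  csc_cot (x / 2 ^ S p) (x / 2 ^ S p) + csc_cot (x / 2 ^ S p) (x / 2 ^ S p + PI / 2)
  + psum (fun i => csc_cot (x / 2 ^ S p) ((x + INR (S i) * PI) / 2 ^ S p)
                 + csc_cot (x / 2 ^ S p) ((x - INR (S i) * PI) / 2 ^ S p))
         (2 ^ p - 1).
Proof.
intros Hx; rewrite (csc_cot_iter (S p) x x Hx).
assert (Hp : 0 < 2 ^ p) by (apply pow_lt; lra).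
assert (Hk : (2 ^ p = S (2 ^ p - 1))%nat)
  by (pose proof (Nat.pow_nonzero 2 p); lia).
set (k := (2 ^ p - 1)%nat) in *; clearbody k.
replace (2 ^ S p)%nat with (S k + S k)%nat by (rewrite Nat.pow_succ_r'; lia).
rewrite psum_pair_ends, <- Hk, INR_pow2; simpl pow.
f_equal; [f_equal; f_equal; simpl INR; field; lra|].
apply psum_ext; intros i Hi.
rewrite <- (csc_cot_add_PI _ ((x - INR (S i) * PI) / (2 * 2 ^ p))).
f_equal; f_equal.
rewrite minus_INR by lia; rewrite plus_INR, INR_pow2; field; lra.
Qed.

Lemma csc_cot_pair_partial_fraction x n k :
  0 < x < PI / 2 -> 1 <= k -> 2 * k + 2 <= n ->
  Rabs (csc_cot (x / n) ((x + k * PI) / n) + csc_cot (x / n) ((x - k * PI) / n)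
        - 4 * x ^ 4 * / (PI ^ 2 * k ^ 2 - x ^ 2) ^ 2)
  <= 4 * (x / n) ^ 2.
Proof.
intros Hx Hk Hn; pose proof PI_RGT_0; pose proof PI2_3_2.
assert (Hxk : x < k * PI) by nra.
replace (4 * x ^ 4 * / (PI ^ 2 * k ^ 2 - x ^ 2) ^ 2) with
  ((x / n) ^ 2 / ((x + k * PI) / n) ^ 2 + (x / n) ^ 2 / ((x - k * PI) / n) ^ 2
   + (x / n) / ((x + k * PI) / n) + (x / n) / ((x - k * PI) / n))
  by (field; repeat split; try lra; nra).
apply csc_cot_pair_approx; [apply Rdiv_lt_0_compat; lra | split | split | field; lra].
- apply Rdiv_lt_0_compat; lra.
- apply Rlt_div_l; nra.
- replace (- ((x - k * PI) / n)) with ((k * PI - x) / n) by (field; lra).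
  apply Rdiv_lt_0_compat; lra.
- replace (- ((x - k * PI) / n)) with ((k * PI - x) / n) by (field; lra).
  apply Rlt_div_l; nra.
Qed.

Lemma csc_cot_partial_fractions x p : 0 < x < PI / 2 ->
  Rabs (csc_cot x x - 2
        - 4 * x ^ 4 * psum (fun i => / (PI ^ 2 * INR (S i) ^ 2 - x ^ 2) ^ 2) (2 ^ p - 1))
  <= 2 * x ^ 2 / 2 ^ p.
Proof.
intros Hx; pose proof PI_4.
assert (Hp : 1 <= 2 ^ p) by (apply pow_R1_Rle; lra).
assert (Hh : INR (2 ^ p - 1) = 2 ^ p - 1)
  by (rewrite minus_INR, INR_pow2 by (pose proof (Nat.pow_nonzero 2 p); lia);
      reflexivity).
set (u := x / 2 ^ S p).
assert (Hu : 0 < u < 1) by (unfold u; simpl; split;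
  [apply Rdiv_lt_0_compat | apply Rlt_div_l]; lra).
assert (Hpairs : Rabs (psum (fun i => csc_cot u ((x + INR (S i) * PI) / 2 ^ S p)
                     + csc_cot u ((x - INR (S i) * PI) / 2 ^ S p)
                     - 4 * x ^ 4 * / (PI ^ 2 * INR (S i) ^ 2 - x ^ 2) ^ 2) (2 ^ p - 1))
                 <= (2 ^ p - 1) * (4 * u ^ 2)).
{ rewrite <- Hh, <- psum_const.
  eapply Rle_trans; [apply psum_abs | apply psum_le; intros i Hi].
  assert (Hi' : INR (S i) + 1 <= 2 ^ p)
    by (rewrite <- INR_pow2, <- S_INR; apply le_INR; lia).
  apply csc_cot_pair_partial_fraction; [lra | apply (le_INR 1); lia |].
  change (2 ^ S p) with (2 * 2 ^ p); lra. }
rewrite (csc_cot_pairs x p) by lra; fold u.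
rewrite psum_minus, psum_scal in Hpairs.
pose proof (csc_cot_diag u Hu) as Hdiag; pose proof (csc_cot_half_pi u Hu) as Hhalf.
assert (Herr : (2 + 6 + (2 ^ p - 1) * 4) * u ^ 2 <= 2 * x ^ 2 / 2 ^ p).
{ replace ((2 + 6 + (2 ^ p - 1) * 4) * u ^ 2) with ((1 + 2 ^ p) / 2 ^ p * (x ^ 2 / 2 ^ p))
    by (unfold u; change (2 ^ S p) with (2 * 2 ^ p); field; lra).
  rewrite <- (Rmult_div_assoc 2); apply Rmult_le_compat_r.
  - apply Rdiv_le_0_compat; [nra | lra].
  - apply Rle_div_l; lra. }
apply Rabs_le_between in Hpairs, Hdiag, Hhalf; apply Rabs_le_between; lra.
Qed.

Lemma le_of_le_add_linear a b c :
  (forall t, 0 < t <= 1 -> a <= b + c * t) -> a <= b.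
Proof.
intros H; apply le_epsilon; intros eps He.
pose proof (Rabs_pos c) as Hc.
set (t := Rmin 1 (eps / (Rabs c + 1))).
assert (Ht : 0 < t <= 1).
{ split; [apply Rmin_glb_lt; [lra | apply Rdiv_lt_0_compat; lra] | apply Rmin_l]. }
assert (Hte : t * (Rabs c + 1) <= eps) by (apply Rle_div_r; [lra | apply Rmin_r]).
pose proof (H t Ht); pose proof (Rle_abs c); nra.
Qed.

Lemma pow2_unbounded r : exists p, r < 2 ^ p.
Proof.
destruct (Pow_x_infinity 2 ltac:(rewrite Rabs_right; lra) (r + 1)) as [p Hp].
exists p; specialize (Hp p (le_n p)).
rewrite Rabs_right in Hp by (left; apply pow_lt; lra); lra.
Qed.

Lemma series_value_spec f l : infinite_sum f l -> series_value f = l.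
Proof.
intros H; unfold series_value; apply (uniqueness_sum f); [|exact H].
apply (epsilon_spec (inhabits 0) (fun l => infinite_sum f l)); exists l; exact H.
Qed.

Lemma Un_cv_const c : Un_cv (fun _ => c) c.
Proof. apply is_lim_seq_Reals, is_lim_seq_const. Qed.

Lemma Un_cv_S u l : Un_cv u l -> Un_cv (fun n => u (S n)) l.
Proof.
intros H eps He; destruct (H eps He) as [K HK].
exists K; intros n Hn; apply HK; lia.
Qed.

Lemma growing_cv_cluster u l : Un_growing u ->
  (forall eps, 0 < eps -> forall K, exists n, (K <= n)%nat /\ Rabs (u n - l) <= eps) ->
  Un_cv u l.
Proof.
intros Hu Hl.
assert (Hub : forall n, u n <= l).
{ intros n; apply Rnot_lt_le; intros Hn.
  destruct (Hl ((u n - l) / 2) ltac:(lra) n) as [m [Hm Hlm]].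
  pose proof (growing_prop u m n Hu Hm); apply Rabs_le_between in Hlm; lra. }
intros eps He; destruct (Hl (eps / 2) ltac:(lra) O) as [K [_ HK]].
exists K; intros n Hn; unfold R_dist.
pose proof (growing_prop u n K Hu Hn); pose proof (Hub n).
apply Rabs_le_between in HK; rewrite Rabs_left1 by lra; lra.
Qed.

Lemma infinite_sum_ext f g l :
  (forall i, f i = g i) -> infinite_sum f l -> infinite_sum g l.
Proof. intros E; apply Un_cv_ext; intros n; apply sum_eq; auto. Qed.

Lemma infinite_sum_scal c f l :
  infinite_sum f l -> infinite_sum (fun i => c * f i) (c * l).
Proof.
intros H; apply (Un_cv_ext (fun n => c * sum_f_R0 f n)).
- intros n; rewrite !sum_f_R0_psum, psum_scal; reflexivity.
- apply CV_mult; [apply Un_cv_const | exact H].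
Qed.

Lemma infinite_sum_plus f g l m : infinite_sum f l -> infinite_sum g m ->
  infinite_sum (fun i => f i + g i) (l + m).
Proof.
intros Hf Hg; apply (Un_cv_ext (fun n => sum_f_R0 f n + sum_f_R0 g n)).
- intros n; rewrite !sum_f_R0_psum, psum_plus; reflexivity.
- apply CV_plus; assumption.
Qed.

Lemma infinite_sum_shift f l :
  infinite_sum f l -> infinite_sum (fun i => f (S i)) (l - f O).
Proof.
intros H; apply (Un_cv_ext (fun n => sum_f_R0 f (S n) - f O)).
- intros n; rewrite !sum_f_R0_psum, (psum_shift f (S n)); ring.
- apply CV_minus; [apply Un_cv_S, H | apply Un_cv_const].
Qed.

Lemma infinite_sum_telescope g :
  Un_cv g 0 -> infinite_sum (fun i => g (S i) - g i) (- g O).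
Proof.
intros H; apply (Un_cv_ext (fun n => g (S n) - g O)).
- intros n; rewrite sum_f_R0_psum, psum_telescope; reflexivity.
- replace (- g O) with (0 - g O) by ring.
  apply CV_minus; [apply Un_cv_S, H | apply Un_cv_const].
Qed.

Lemma infinite_sum_le f g l m : (forall i, f i <= g i) ->
  infinite_sum f l -> infinite_sum g m -> l <= m.
Proof. intros H; apply Rle_cv_lim; intros n; apply sum_Rle; auto. Qed.

Lemma infinite_sum_lt f g l m : (forall i, f i <= g i) -> f O < g O ->
  infinite_sum f l -> infinite_sum g m -> l < m.
Proof.
intros Hle Hlt Hf Hg; apply infinite_sum_shift in Hf, Hg.
pose proof (infinite_sum_le _ _ _ _ (fun i => Hle (S i)) Hf Hg); lra.
Qed.

Lemma infinite_sum_bounded f B : (forall i, 0 <= f i) ->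
  (forall n, psum f n <= B) -> exists l, infinite_sum f l.
Proof.
intros Hf HB; destruct (growing_cv (sum_f_R0 f)) as [l Hl].
- intros n; simpl; specialize (Hf (S n)); lra.
- exists B; intros y [n ->]; rewrite sum_f_R0_psum; apply HB.
- exists l; exact Hl.
Qed.

Lemma psum_inv_sq_le s n : 0 < s ->
  psum (fun k => / (s + INR k) ^ 2) n <= / s ^ 2 + / s.
Proof.
intros Hs.
assert (Hpos : forall k, 0 < s + INR k) by (intros k; pose proof (pos_INR k); lra).
destruct n as [|n].
- simpl psum; pose proof (Rinv_0_lt_compat _ (pow_lt _ 2 Hs)).
  pose proof (Rinv_0_lt_compat _ Hs); lra.
- rewrite psum_shift; change (INR 0) with 0; rewrite Rplus_0_r.
  apply Rplus_le_compat_l.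
  (* [1/(s+k+1)^2 <= 1/(s+k) - 1/(s+k+1)] telescopes *)
  apply Rle_trans with (psum (fun k => - / (s + INR (S k)) - - / (s + INR k)) n).
  + apply psum_le; intros k _; rewrite !S_INR.
    specialize (Hpos k).
    replace (- / (s + (INR k + 1)) - - / (s + INR k))
      with (/ ((s + INR k) * (s + INR k + 1))) by (field; lra).
    apply Rinv_le_contravar; [apply Rmult_lt_0_compat; lra|].
    replace ((s + (INR k + 1)) ^ 2) with ((s + INR k + 1) * (s + INR k + 1)) by ring.
    nra.
  + pose proof (psum_telescope (fun k => - / (s + INR k)) n) as T; cbv beta in T.
    rewrite T; change (INR 0) with 0.
    rewrite Rplus_0_r; pose proof (Rinv_0_lt_compat _ (Hpos n)); lra.
Qed.

Lemma psi1_series s : 0 < s -> infinite_sum (fun k => / (s + INR k) ^ 2) (psi1 s).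
Proof.
intros Hs; destruct (infinite_sum_bounded (fun k => / (s + INR k) ^ 2) (/ s ^ 2 + / s))
  as [l Hl].
- intros k; left; apply Rinv_0_lt_compat, pow_lt; pose proof (pos_INR k); lra.
- intros n; apply psum_inv_sq_le, Hs.
- unfold psi1; rewrite (series_value_spec _ _ Hl); exact Hl.
Qed.

Lemma psi3_series s : 1 <= s ->
  infinite_sum (fun k => / (s + INR k) ^ 4) (psi3 s / 6).
Proof.
intros Hs; destruct (infinite_sum_bounded (fun k => / (s + INR k) ^ 4) (/ s ^ 2 + / s))
  as [l Hl].
- intros k; left; apply Rinv_0_lt_compat, pow_lt; pose proof (pos_INR k); lra.
- intros n; eapply Rle_trans; [|apply (psum_inv_sq_le s n); lra].
  apply psum_le; intros k _; pose proof (pos_INR k).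
  apply Rinv_le_contravar; [apply pow_lt; lra|].
  replace ((s + INR k) ^ 4) with ((s + INR k) ^ 2 * (s + INR k) ^ 2) by ring.
  assert (1 <= (s + INR k) ^ 2) by nra; nra.
- unfold psi3; rewrite (series_value_spec _ _ Hl).
  replace (6 * l / 6) with l by field; exact Hl.
Qed.

(** * The tail series *)

Definition tail_term (N : nat) (x : R) (i : nat) : R :=
  / (PI ^ 2 * INR (N + S i) ^ 2 - x ^ 2) ^ 2.

Lemma F_N_partial_sums N x p : 0 < x < PI / 2 -> (N < 2 ^ p)%nat ->
  Rabs (F_N N x - 4 * x ^ 4 * psum (tail_term N x) (2 ^ p - 1 - N))
  <= 2 * x ^ 2 / 2 ^ p.
Proof.
intros Hx HN; pose proof PI2_3_2.
assert (Hs : 0 < sin x) by (apply sin_gt_0; lra).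
assert (Hc : 0 < cos x) by (apply cos_gt_0; lra).
replace (F_N N x - 4 * x ^ 4 * psum (tail_term N x) (2 ^ p - 1 - N))
  with (csc_cot x x - 2
        - 4 * x ^ 4 * psum (fun i => / (PI ^ 2 * INR (S i) ^ 2 - x ^ 2) ^ 2) (2 ^ p - 1)).
- apply csc_cot_partial_fractions, Hx.
- set (M := (2 ^ p - 1 - N)%nat).
  replace (2 ^ p - 1)%nat with (N + M)%nat by (unfold M; lia).
  rewrite psum_add_range.
  rewrite (psum_ext (fun j => / (PI ^ 2 * INR (S (N + j)) ^ 2 - x ^ 2) ^ 2)
                    (tail_term N x))
    by (intros; unfold tail_term; rewrite Nat.add_succ_r; reflexivity).
  unfold F_N, csc_cot, tan; rewrite sum_1_to_psum; field; lra.
Qed.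

Lemma tail_term_denom_ge N i : PI ^ 2 <= PI ^ 2 * INR (N + S i) ^ 2.
Proof.
assert (1 <= INR (N + S i)) by (apply (le_INR 1); lia).
rewrite <- (Rmult_1_r (PI ^ 2)) at 1.
apply Rmult_le_compat_l; [apply pow2_ge_0 | nra].
Qed.

Lemma tail_term_pos N x i : 0 <= x <= PI / 2 -> 0 < tail_term N x i.
Proof.
intros Hx; pose proof (tail_term_denom_ge N i); pose proof PI_RGT_0.
unfold tail_term; apply Rinv_0_lt_compat, pow_lt; nra.
Qed.

Lemma tail_term_lt N x y i : 0 <= x -> x < y -> y <= PI / 2 ->
  tail_term N x i < tail_term N y i.
Proof.
intros H0x Hxy Hy; pose proof (tail_term_denom_ge N i); pose proof PI_RGT_0.
unfold tail_term; set (A := PI ^ 2 * INR (N + S i) ^ 2) in *.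
apply Rinv_lt_contravar; [apply Rmult_lt_0_compat; apply pow_lt; nra|].
assert (0 < A - y ^ 2 < A - x ^ 2) by nra.
simpl; nra.
Qed.

Lemma tail_term_le_near_0 N x i : 0 < x <= 1 ->
  tail_term N x i <= (1 + x ^ 2) * tail_term N 0 i.
Proof.
intros Hx; pose proof (tail_term_denom_ge N i); pose proof PI2_3_2.
unfold tail_term; set (A := PI ^ 2 * INR (N + S i) ^ 2) in *.
replace (A - 0 ^ 2) with A by ring.
assert (Ht : 0 < x ^ 2 <= 1) by (split; nra).
set (t := x ^ 2) in *; clearbody t.
assert (HA : 9 <= A) by nra.
assert (Hkey : A ^ 2 <= (1 + t) * (A - t) ^ 2).
{ replace ((1 + t) * (A - t) ^ 2) with (A ^ 2 + t * (A * (A - 2 - 2 * t) + t + t ^ 2))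
    by ring.
  assert (0 <= A * (A - 2 - 2 * t)) by (apply Rmult_le_pos; lra).
  assert (0 <= t * (A * (A - 2 - 2 * t) + t + t ^ 2)) by (apply Rmult_le_pos; nra).
  lra. }
replace ((1 + t) * / A ^ 2) with (/ (A ^ 2 / (1 + t))) by (field; nra).
apply Rinv_le_contravar; [apply Rdiv_lt_0_compat; nra|].
apply Rle_div_l; nra.
Qed.

Lemma tail_term_ge_near_half_pi N d i : 0 < d <= 1 ->
  (1 - 2 * d) * tail_term N (PI / 2) i <= tail_term N (PI / 2 - d) i.
Proof.
intros Hd; pose proof (tail_term_denom_ge N i); pose proof PI2_3_2; pose proof PI_4.
unfold tail_term; set (A := PI ^ 2 * INR (N + S i) ^ 2) in *.
set (B := A - (PI / 2) ^ 2); set (C := A - (PI / 2 - d) ^ 2).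
assert (HB : 27 / 4 <= B) by (unfold B; nra).
assert (HC : B <= C <= B + d * PI) by (unfold B, C; split; nra).
assert (0 < / C ^ 2) by (apply Rinv_0_lt_compat, pow_lt; lra).
destruct (Rle_lt_dec (1 - 2 * d) 0) as [Hn|Hp].
- assert (0 <= / B ^ 2) by (left; apply Rinv_0_lt_compat, pow_lt; lra); nra.
- assert (Hkey : (1 - 2 * d) * C ^ 2 <= B ^ 2).
  { apply Rle_trans with ((1 - 2 * d) * (B + d * PI) ^ 2).
    { apply Rmult_le_compat_l; [lra | apply pow_incr; lra]. }
    replace ((1 - 2 * d) * (B + d * PI) ^ 2)
      with (B ^ 2 + d * ((1 - 2 * d) * (2 * B * PI + d * PI ^ 2) - 2 * B ^ 2)) by ring.
    assert ((1 - 2 * d) * (2 * B * PI + d * PI ^ 2) <= 2 * B * PI + PI ^ 2) by nra.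
    assert (2 * B * PI + PI ^ 2 <= 2 * B ^ 2) by nra.
    assert (d * ((1 - 2 * d) * (2 * B * PI + d * PI ^ 2) - 2 * B ^ 2) <= 0)
      by (apply Rmult_le_0_l; lra).
    lra. }
  replace ((1 - 2 * d) * / B ^ 2) with ((1 - 2 * d) * C ^ 2 / B ^ 2 * / C ^ 2)
    by (field; split; lra).
  rewrite <- (Rmult_1_l (/ C ^ 2)) at 2.
  apply Rmult_le_compat_r; [lra|].
  apply (Rdiv_le_1 _ _ (pow_lt B 2 ltac:(lra))), Hkey.
Qed.

Lemma tail_sum_at_0 N : infinite_sum (tail_term N 0) (alpha_N N / 4).
Proof.
pose proof PI_RGT_0; pose proof (pos_INR N).
replace (alpha_N N / 4) with (/ PI ^ 4 * (psi3 (INR N + 1) / 6))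
  by (unfold alpha_N; field; lra).
apply (infinite_sum_ext (fun k => / PI ^ 4 * / (INR N + 1 + INR k) ^ 4)).
- intros k; pose proof (pos_INR k); unfold tail_term.
  rewrite plus_INR, S_INR; field; lra.
- apply infinite_sum_scal, psi3_series; lra.
Qed.

Lemma tail_sum_at_half_pi N : infinite_sum (tail_term N (PI / 2)) (beta_N N / 4).
Proof.
pose proof PI_RGT_0; pose proof (pos_INR N).
set (q i := / (2 * INR N + 1 + 2 * INR i)).
assert (Hq : forall i, 0 < 2 * INR N + 1 + 2 * INR i)
  by (intros i; pose proof (pos_INR i); lra).
(* With k = N + 1 + i, [q i = 1/(2k-1)] and [q (S i) = 1/(2k+1)],
   so that [2 q i q (S i) = q i - q (S i)]. *)
assert (Hterm : forall i, tail_term N (PI / 2) i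
          = 4 / PI ^ 4 * ((q i ^ 2 + q (S i) ^ 2) + (q (S i) - q i))).
{ intros i; unfold tail_term, q; rewrite plus_INR, !S_INR.
  pose proof (Hq i); pose proof (pos_INR i).
  assert (1 <= (INR N + (INR i + 1)) ^ 2) by nra.
  assert (0 < PI ^ 2) by nra.
  assert (0 < PI ^ 2 * (INR N + (INR i + 1)) ^ 2 - (PI / 2) ^ 2) by nra.
  field; repeat split; nra. }
assert (Hsq : infinite_sum (fun i => q i ^ 2) (/ 4 * psi1 (INR N + / 2))).
{ apply (infinite_sum_ext (fun i => / 4 * / (INR N + / 2 + INR i) ^ 2)).
  - intros i; unfold q; pose proof (Hq i); field; lra.
  - apply infinite_sum_scal, psi1_series; lra. }
assert (Hq0 : Un_cv q 0).
{ apply cv_infty_cv_0; intros M; destruct (INR_unbounded M) as [n Hn].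
  exists n; intros m Hm; apply le_INR in Hm; pose proof (pos_INR n); lra. }
apply (infinite_sum_ext _ _ _ (fun i => eq_sym (Hterm i))).
replace (beta_N N / 4) with
  (4 / PI ^ 4 * ((/ 4 * psi1 (INR N + / 2) + (/ 4 * psi1 (INR N + / 2) - q O ^ 2)) - q O))
  by (unfold beta_N, q; simpl INR; field; lra).
apply infinite_sum_scal, infinite_sum_plus;
  [apply infinite_sum_plus; [|apply (infinite_sum_shift (fun i => q i ^ 2))]|];
  auto using infinite_sum_telescope.
Qed.

Lemma F_N_series N x : 0 < x < PI / 2 ->
  infinite_sum (tail_term N x) (F_N N x / (4 * x ^ 4)).
Proof.
intros Hx; pose proof PI2_3_2.
assert (Hx4 : 0 < 4 * x ^ 4) by (apply Rmult_lt_0_compat; [lra | apply pow_lt; lra]).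
apply growing_cv_cluster.
- intros n; simpl; pose proof (tail_term_pos N x (S n)); lra.
- intros eps He K.
  assert (Hxe : 0 < 2 * x ^ 2 * eps) by (apply Rmult_lt_0_compat; [nra | lra]).
  destruct (pow2_unbounded (INR (N + K + 1) + / (2 * x ^ 2 * eps))) as [p Hp].
  assert (Hpe : 1 < 2 * x ^ 2 * eps * 2 ^ p).
  { rewrite <- (Rinv_r (2 * x ^ 2 * eps)) by lra; apply Rmult_lt_compat_l; [lra|].
    pose proof (pos_INR (N + K + 1)); lra. }
  assert (HpK : (N + K + 1 < 2 ^ p)%nat).
  { apply INR_lt; rewrite INR_pow2; pose proof (Rinv_0_lt_compat _ Hxe); lra. }
  exists (2 ^ p - 2 - N)%nat; split; [lia|].
  rewrite sum_f_R0_psum; replace (S (2 ^ p - 2 - N)) with (2 ^ p - 1 - N)%nat by lia.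
  pose proof (F_N_partial_sums N x p Hx ltac:(lia)) as Happrox.
  replace (psum (tail_term N x) (2 ^ p - 1 - N) - F_N N x / (4 * x ^ 4))
    with (- (F_N N x - 4 * x ^ 4 * psum (tail_term N x) (2 ^ p - 1 - N)) / (4 * x ^ 4))
    by (field; lra).
  rewrite Rabs_div, Rabs_Ropp, (Rabs_right (4 * x ^ 4)) by lra.
  apply Rle_div_l; [lra|]; eapply Rle_trans; [exact Happrox|].
  assert (0 < 2 ^ p) by (apply pow_lt; lra).
  apply Rle_div_l; [lra|]; nra.
Qed.

Lemma F_N_bounds N x : 0 < x < PI / 2 ->
  alpha_N N * x ^ 4 < F_N N x < beta_N N * x ^ 4.
Proof.
intros Hx; pose proof (F_N_series N x Hx) as HF.
assert (Hx4 : 0 < 4 * x ^ 4) by (apply Rmult_lt_0_compat; [lra | apply pow_lt; lra]).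
assert (Hlo : alpha_N N / 4 < F_N N x / (4 * x ^ 4)).
{ apply (infinite_sum_lt (tail_term N 0) (tail_term N x)); auto using tail_sum_at_0.
  - intros i; left; apply tail_term_lt; lra.
  - apply tail_term_lt; lra. }
assert (Hhi : F_N N x / (4 * x ^ 4) < beta_N N / 4).
{ apply (infinite_sum_lt (tail_term N x) (tail_term N (PI / 2)));
    auto using tail_sum_at_half_pi.
  - intros i; left; apply tail_term_lt; lra.
  - apply tail_term_lt; lra. }
apply (Rlt_div_r _ _ _ Hx4) in Hlo; apply (Rlt_div_l _ _ _ Hx4) in Hhi.
split; [replace (alpha_N N * x ^ 4) with (alpha_N N / 4 * (4 * x ^ 4)) by field
       |replace (beta_N N * x ^ 4) with (beta_N N / 4 * (4 * x ^ 4)) by field]; lra.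
Qed.

Lemma alpha_N_sharp N a :
  (forall x, 0 < x < PI / 2 -> a * x ^ 4 < F_N N x) -> a <= alpha_N N.
Proof.
intros Ha; apply (le_of_le_add_linear a (alpha_N N) (Rabs (alpha_N N))).
intros t Ht; pose proof PI2_3_2.
assert (Hx : 0 < t < PI / 2) by lra.
assert (Ht4 : 0 < 4 * t ^ 4) by (apply Rmult_lt_0_compat; [lra | apply pow_lt; lra]).
assert (Hup : F_N N t / (4 * t ^ 4) <= (1 + t ^ 2) * (alpha_N N / 4)).
{ apply (infinite_sum_le (tail_term N t) (fun i => (1 + t ^ 2) * tail_term N 0 i)).
  - intros i; apply tail_term_le_near_0; lra.
  - apply F_N_series, Hx.
  - apply infinite_sum_scal, tail_sum_at_0. }
apply (Rle_div_l _ _ _ Ht4) in Hup.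
specialize (Ha t Hx).
assert (a < (1 + t ^ 2) * alpha_N N) by nra.
assert (alpha_N N * t ^ 2 <= Rabs (alpha_N N) * t ^ 2)
  by (apply Rmult_le_compat_r; [nra | apply Rle_abs]).
assert (Rabs (alpha_N N) * t ^ 2 <= Rabs (alpha_N N) * t)
  by (apply Rmult_le_compat_l; [apply Rabs_pos | nra]).
lra.
Qed.

Lemma beta_N_sharp N b :
  (forall x, 0 < x < PI / 2 -> F_N N x < b * x ^ 4) -> beta_N N <= b.
Proof.
intros Hb; apply (le_of_le_add_linear (beta_N N) b (2 * Rabs (beta_N N))).
intros d Hd; pose proof PI2_3_2.
assert (Hx : 0 < PI / 2 - d < PI / 2) by lra.
assert (Hx4 : 0 < 4 * (PI / 2 - d) ^ 4)
  by (apply Rmult_lt_0_compat; [lra | apply pow_lt; lra]).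
assert (Hlow : (1 - 2 * d) * (beta_N N / 4)
               <= F_N N (PI / 2 - d) / (4 * (PI / 2 - d) ^ 4)).
{ apply (infinite_sum_le (fun i => (1 - 2 * d) * tail_term N (PI / 2) i)
                         (tail_term N (PI / 2 - d))).
  - intros i; apply tail_term_ge_near_half_pi; lra.
  - apply infinite_sum_scal, tail_sum_at_half_pi.
  - apply F_N_series, Hx. }
apply (Rle_div_r _ _ _ Hx4) in Hlow.
specialize (Hb _ Hx).
assert ((1 - 2 * d) * beta_N N < b) by nra.
assert (beta_N N * d <= Rabs (beta_N N) * d)
  by (apply Rmult_le_compat_r; [lra | apply Rle_abs]).
lra.
Qed.

Theorem theorem7 (N : nat) :
  (forall x : R, 0 < x < PI / 2 ->
     alpha_N N * x ^ 4 < F_N N x < beta_N N * x ^ 4)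
  /\ (forall a : R, (forall x : R, 0 < x < PI / 2 -> a * x ^ 4 < F_N N x) ->
        a <= alpha_N N)
  /\ (forall b : R, (forall x : R, 0 < x < PI / 2 -> F_N N x < b * x ^ 4) ->
        beta_N N <= b).
Proof.
split; [|split].
- apply F_N_bounds.
- apply alpha_N_sharp.
- apply beta_N_sharp.
Qed.
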